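(* Let $E\subset\Delta_n$ be a finite set and suppose the market weight sequence $\{\mu(t)\}_{t\ge0}$ takes values in $E$. Let $\Theta=(\overline{\Delta}_n)^E$ be the set of all portfolio maps $\pi:E\to\overline{\Delta}_n$, with the topology of uniform (equivalently pointwise) convergence. Suppose the empirical measures $\mathbb P_t$ converge weakly to a probability measure $\mathbb P$ on $E\times E$. Then for each $\pi\in\Theta$ the limit $W(\pi)=\lim_{t\to\infty}\frac1t\log V_\pi(t)$ exists and equals $\int_{E\times E}\ell_\pi\,d\mathbb P$. Moreover there exists $\pi^*\in\Theta$ with $W(\pi^* )=W^*:=\max_{\pi\in\Theta}W(\pi)$, and writing $\mathbb P(p,q)=\mathbb P_1(p)\mathbb P_2(q\mid p)$ with $\mathbb P_1$ the first marginal and $\mathbb P_2$ the conditional distribution, such a $\pi^*$ satisfies $\pi^*(p)\in\operatorname{argmax}_{x\in\overline{\Delta}_n}\int_E\log\left(x\cdot\frac{q}{p}\right)\mathbb P_2(dq\mid p)$ for every $p$ with $\mathbb P_1(p)>0$.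
   Context: $\Delta_n=\{p\in(0,1)^n:\sum_ip_i=1\}$, $\overline{\Delta}_n$ its closure in the hyperplane $\sum_ip_i=1$ ($n\ge2$). For a portfolio map $\pi$, the relative value is $V_\pi(0)=1$, $V_\pi(t+1)=V_\pi(t)\,\pi(\mu(t))\cdot\frac{\mu(t+1)}{\mu(t)}$, where $a\cdot b$ is the Euclidean inner product and $a/b$ the componentwise ratio. $\ell_\pi(p,q)=\log\left(\pi(p)\cdot\frac qp\right)$, and $\mathbb P_t=\frac1t\sum_{s=0}^{t-1}\delta_{(\mu(s),\mu(s+1))}$. *)

From HB Require Import structures.
From mathcomp Require Import all_boot all_order all_algebra.
From mathcomp Require Import all_classical all_reals all_analysis.
Set Implicit Arguments. Unset Strict Implicit. Unset Printing Implicit Defensive.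
Import Order.TTheory GRing.Theory Num.Theory.
Import numFieldNormedType.Exports.
Local Open Scope ring_scope.

Section Defs.
Variables (R : realType) (n : nat).
Notation vec := 'rV[R]_n.

Definition open_simplex (p : vec) : Prop :=
  (forall i, 0 < p ord0 i) /\ \sum_(i < n) p ord0 i = 1.

Definition closed_simplex (x : vec) : Prop :=
  (forall i, 0 <= x ord0 i) /\ \sum_(i < n) x ord0 i = 1.

Definition dot_ratio (x p q : vec) : R := \sum_(i < n) x ord0 i * (q ord0 i / p ord0 i).

Fixpoint relval (pi : vec -> vec) (mu : nat -> vec) (t : nat) : R :=
  match t with
  | 0 => 1
  | s.+1 => relval pi mu s * dot_ratio (pi (mu s)) (mu s) (mu s.+1)
  end.

Definition ell (pi : vec -> vec) (p q : vec) : R := ln (dot_ratio (pi p) p q).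

(* integral of f against the empirical measure P_t *)
Definition emp_int (mu : nat -> vec) (t : nat) (f : vec -> vec -> R) : R :=
  t%:R^-1 * \sum_(s < t) f (mu s) (mu s.+1).

(* integral of f against a measure P on E x E given by its masses *)
Definition disc_int (E : seq vec) (P : vec -> vec -> R) (f : vec -> vec -> R) : R :=
  \sum_(p <- E) \sum_(q <- E) P p q * f p q.

Definition growth (pi : vec -> vec) (mu : nat -> vec) : R :=
  limn (fun t : nat => t%:R^-1 * ln (relval pi mu t)).

Definition marg1 (E : seq vec) (P : vec -> vec -> R) (p : vec) : R :=
  \sum_(q <- E) P p q.
Definition cond2 (E : seq vec) (P : vec -> vec -> R) (q p : vec) : R :=
  P p q / marg1 E P p.

End Defs.

From HB Require Import structures.
From mathcomp Require Import all_boot all_order all_algebra.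
From mathcomp Require Import all_classical all_reals all_analysis.
Set Implicit Arguments. Unset Strict Implicit. Unset Printing Implicit Defensive.
Import Order.TTheory GRing.Theory Num.Theory.
Import numFieldNormedType.Exports.
Local Open Scope classical_set_scope.
Local Open Scope ring_scope.

(* Since mu stays in E, log V_pi(t) is the telescoping sum of ell_pi along the
   path, so (1/t) log V_pi(t) is the integral of ell_pi against P_t and tends
   to its integral against P.  That integral splits as a sum over p in E of
   the unnormalised conditional expected log-return of pi(p), a continuous
   function of pi(p) on the compact simplex; maximising each summand
   separately gives pi^*, and conversely a maximiser of the sum must maximise
   every summand, which after dividing by P_1(p) > 0 is the argmax property. *)

Lemma pointwise_argmax_of_sum_argmax (T : eqType) (U : Type) (K : numDomainType)
    (E : seq T) (S : U -> Prop) (F : T -> U -> K) (f : T -> U) (p : T) (x : U) :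
  uniq E -> p \in E -> S x -> (forall t, t \in E -> S (f t)) ->
  (forall g, (forall t, t \in E -> S (g t)) ->
     \sum_(t <- E) F t (g t) <= \sum_(t <- E) F t (f t)) ->
  F p x <= F p (f p).
Proof.
move=> uE pE Sx Sf fmax.
pose g t := if t == p then x else f t.
have Sg t : t \in E -> S (g t) by rewrite /g; case: eqP => // _; exact: Sf.
have := fmax g Sg; rewrite (bigD1_seq p) //= [leRHS](bigD1_seq p) //= /g eqxx.
by rewrite (eq_bigr (fun t => F t (f t))) ?lerD2r // => t /negbTE ->.
Qed.

Section log_optimal_portfolio.
Variables (R : realType) (n : nat).
Implicit Types (x p q : 'rV[R]_n) (E : seq 'rV[R]_n) (P : 'rV[R]_n -> 'rV[R]_n -> R).

Lemma dot_ratio_gt0 x p q :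
  closed_simplex x -> open_simplex p -> open_simplex q -> 0 < dot_ratio x p q.
Proof.
move=> [x_ge0 x_sum1] [p_gt0 _] [q_gt0 _].
have term_ge0 i : 0 <= x ord0 i * (q ord0 i / p ord0 i).
  by rewrite mulr_ge0 // divr_ge0 // ltW.
rewrite lt_def sumr_ge0 ?andbT //; apply/eqP => /psumr_eq0P term0.
suff : \sum_(i < n) x ord0 i = 0 by rewrite x_sum1 => /eqP; rewrite oner_eq0.
apply: big1 => i _; apply/eqP.
have /eqP := term0 (fun j _ => term_ge0 j) i isT.
by rewrite !mulf_eq0 invr_eq0 (gt_eqF (q_gt0 i)) (gt_eqF (p_gt0 i)) !orbF.
Qed.

Lemma continuous_dot_ratio p q : continuous (fun x => dot_ratio x p q).
Proof.
apply: (continuous_big (op := +%R) (x0 := 0) add_continuous) => i _.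
move=> x; apply: (@continuousM R _ (fun y : 'rV[R]_n => y ord0 i) (fun=> q ord0 i / p ord0 i)).
  exact: coord_continuous.
exact: cst_continuous.
Qed.

Lemma closed_simplex_closed : closed (@closed_simplex R n).
Proof.
have -> : @closed_simplex R n =
    \bigcap_(i in setT) [set x | 0 <= x ord0 i] `&` [set x | \sum_(i < n) x ord0 i = 1].
  apply/seteqP; split => x [x_ge0 x_sum1]; split => // i; last exact: x_ge0.
  by move=> _; exact: x_ge0.
apply: closedI.
  apply: closed_bigI => i _.
  apply: (@preimage_closed _ _ (fun x : 'rV[R]_n => x ord0 i) [set y | 0 <= y]).
    by move=> y _; exact: coord_continuous.
  exact: closed_ge.
apply: (@preimage_closed _ _ (fun x : 'rV[R]_n => \sum_(i < n) x ord0 i) [set y | y = 1]).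
  move=> y _; apply: (continuous_big (op := +%R) (x0 := 0) add_continuous) => i _.
  exact: coord_continuous.
exact: closed_eq.
Qed.

Lemma closed_simplex_compact : compact (@closed_simplex R n).
Proof.
have unit_cube_compact : compact [set x : 'rV[R]_n | forall i, x ord0 i \in `[0, 1]].
  by apply: (@rV_compact R n (fun=> `[(0 : R), 1]%classic)) => _; exact: segment_compact.
apply: (subclosed_compact closed_simplex_closed unit_cube_compact).
move=> x [x_ge0 x_sum1] i /=; rewrite in_itv /= x_ge0 -x_sum1.
by rewrite (bigD1 i) //= lerDl sumr_ge0.
Qed.

Lemma closed_simplex_barycenter : (0 < n)%N -> closed_simplex (const_mx n%:R^-1 : 'rV[R]_n).
Proof.
move=> n_gt0; split => [i|]; first by rewrite mxE invr_ge0 ler0n.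
under eq_bigr do rewrite mxE.
by rewrite sumr_const card_ord -[_ *+ n]mulr_natr mulVf // pnatr_eq0 -lt0n.
Qed.

(* The summand of disc_int E P (ell pi) attached to p, as a function of pi p. *)
Definition log_return_at E P p x : R := \sum_(q <- E) P p q * ln (dot_ratio x p q).

Lemma continuous_log_return_at E P p x :
  (forall q, q \in E -> open_simplex q) -> p \in E -> closed_simplex x ->
  {for x, continuous (log_return_at E P p)}.
Proof.
move=> E_open pE x_simplex.
have -> : log_return_at E P p =
    fun y => \sum_(q <- E | q \in E) P p q * ln (dot_ratio y p q).
  by apply/funext => y; rewrite /log_return_at big_seq.
apply: (cvg_big (op := +%R) (x0 := 0) add_continuous) => [|q qE]; first exact: nbhs_filter.
apply: (@continuousM R _ (fun=> P p q) (fun y => ln (dot_ratio y p q))).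
  exact: cst_continuous.
apply: continuous_comp; first exact: continuous_dot_ratio.
by apply: continuous_ln; apply: dot_ratio_gt0 => //; apply: E_open.
Qed.

Lemma log_return_at_argmax E P p : (0 < n)%N ->
  (forall q, q \in E -> open_simplex q) -> p \in E ->
  exists2 c, closed_simplex c &
    forall x, closed_simplex x -> log_return_at E P p x <= log_return_at E P p c.
Proof.
move=> n_gt0 E_open pE.
have [|c] := @EVT_max_rV R n (log_return_at E P p) _
  (ex_intro _ _ (closed_simplex_barycenter n_gt0)) closed_simplex_compact.
  apply: continuous_in_subspaceT => x; rewrite inE => x_simplex.
  exact: continuous_log_return_at.
by rewrite inE => c_simplex c_max; exists c => // x x_simplex; apply: c_max; rewrite inE.
Qed.

Lemma log_return_maximizer_exists E P : (0 < n)%N ->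
  (forall q, q \in E -> open_simplex q) ->
  exists pis : 'rV[R]_n -> 'rV[R]_n, (forall p, closed_simplex (pis p)) /\
    forall p, p \in E -> forall x, closed_simplex x ->
      log_return_at E P p x <= log_return_at E P p (pis p).
Proof.
move=> n_gt0 E_open.
have argmax p : exists c, closed_simplex c /\ (p \in E -> forall x, closed_simplex x ->
    log_return_at E P p x <= log_return_at E P p c).
  have [pE|_] := boolP (p \in E).
    by have [c ? ?] := log_return_at_argmax P n_gt0 E_open pE; exists c.
  by exists (const_mx n%:R^-1); split => //; exact: closed_simplex_barycenter.
have [pis pis_max] := choice argmax.
by exists pis; split => p; [exact: (pis_max p).1 | exact: (pis_max p).2].
Qed.

Lemma cond_log_returnE E P p x :
  \sum_(q <- E) cond2 E P q p * ln (dot_ratio x p q)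
  = (marg1 E P p)^-1 * log_return_at E P p x.
Proof. by rewrite /log_return_at mulr_sumr; apply: eq_bigr => q _; rewrite mulrCA mulrA. Qed.

Section growth_rate.
Variables (E : seq 'rV[R]_n) (mu : nat -> 'rV[R]_n) (pi : 'rV[R]_n -> 'rV[R]_n).
Hypothesis E_open : forall p, p \in E -> open_simplex p.
Hypothesis mu_in_E : forall t, mu t \in E.
Hypothesis pi_simplex : forall p, p \in E -> closed_simplex (pi p).

Let step_gt0 s : 0 < dot_ratio (pi (mu s)) (mu s) (mu s.+1).
Proof. by apply: dot_ratio_gt0; auto. Qed.

Lemma relval_gt0 t : 0 < relval pi mu t.
Proof. by elim: t => //= t IHt; rewrite mulr_gt0. Qed.

Lemma ln_relval t : ln (relval pi mu t) = \sum_(s < t) ell pi (mu s) (mu s.+1).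
Proof.
elim: t => /= [|t IHt]; first by rewrite ln1 big_ord0.
by rewrite lnM ?posrE ?relval_gt0 // IHt big_ord_recr.
Qed.

Lemma growth_rate_cvg P :
  (fun t => emp_int mu t (ell pi)) @ \oo --> disc_int E P (ell pi) ->
  (fun t : nat => t%:R^-1 * ln (relval pi mu t)) @ \oo --> disc_int E P (ell pi)
  /\ growth pi mu = disc_int E P (ell pi).
Proof.
rewrite /growth.
have -> : (fun t : nat => t%:R^-1 * ln (relval pi mu t)) = emp_int mu ^~ (ell pi).
  by apply/funext => t; rewrite ln_relval.
by move=> cvg_emp; split => //; apply: cvg_lim.
Qed.

End growth_rate.

End log_optimal_portfolio.

Theorem lemma3p2 (R : realType) (n : nat) (E : seq 'rV[R]_n)
  (mu : nat -> 'rV[R]_n) (P : 'rV[R]_n -> 'rV[R]_n -> R) :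
  (2 <= n)%N ->
  uniq E ->
  (forall p, p \in E -> open_simplex p) ->
  (forall t, mu t \in E) ->
  (* P is a probability measure on E x E *)
  (forall p q, p \in E -> q \in E -> 0 <= P p q) ->
  disc_int E P (fun _ _ => 1) = 1 ->
  (* weak convergence of P_t to P (every function on the finite discrete
     space E x E is bounded continuous) *)
  (forall f : 'rV[R]_n -> 'rV[R]_n -> R,
      (fun t => emp_int mu t f) @ \oo --> disc_int E P f) ->
  (* Theta = portfolio maps E -> closed simplex *)
  (forall pi : 'rV[R]_n -> 'rV[R]_n,
      (forall p, p \in E -> closed_simplex (pi p)) ->
      (fun t : nat => t%:R^-1 * ln (relval pi mu t)) @ \oo --> disc_int E P (ell pi)
      /\ growth pi mu = disc_int E P (ell pi))
  /\ (exists pis : 'rV[R]_n -> 'rV[R]_n,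
        (forall p, p \in E -> closed_simplex (pis p)) /\
        (forall pi : 'rV[R]_n -> 'rV[R]_n,
            (forall p, p \in E -> closed_simplex (pi p)) ->
            growth pi mu <= growth pis mu))
  /\ (forall pis : 'rV[R]_n -> 'rV[R]_n,
        (forall p, p \in E -> closed_simplex (pis p)) ->
        (forall pi : 'rV[R]_n -> 'rV[R]_n,
            (forall p, p \in E -> closed_simplex (pi p)) ->
            growth pi mu <= growth pis mu) ->
        forall p, p \in E -> 0 < marg1 E P p ->
          closed_simplex (pis p) /\
          forall x : 'rV[R]_n, closed_simplex x ->
            \sum_(q <- E) cond2 E P q p * ln (dot_ratio x p q)
            <= \sum_(q <- E) cond2 E P q p * ln (dot_ratio (pis p) p q)).
Proof.
(* The argument never uses that P is nonnegative or has total mass 1. *)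
move=> n_ge2 uE E_open mu_in_E _ _ emp_cvg.
have n_gt0 : (0 < n)%N by apply: leq_trans n_ge2.
have W_cvg pi (pi_simplex : forall p, p \in E -> closed_simplex (pi p)) :=
  growth_rate_cvg E_open mu_in_E pi_simplex (emp_cvg (ell pi)).
have growthE pi : (forall p, p \in E -> closed_simplex (pi p)) ->
    growth pi mu = \sum_(p <- E) log_return_at E P p (pi p).
  by move=> pi_simplex; rewrite (W_cvg pi pi_simplex).2.
split => //; split.
  have [pis [pis_simplex pis_max]] := log_return_maximizer_exists P n_gt0 E_open.
  exists pis; split=> // pi pi_simplex; rewrite !growthE //.
  by rewrite big_seq [leRHS]big_seq; apply: ler_sum => p pE; apply: pis_max; auto.
move=> pis pis_simplex pis_max p pE marg_gt0.
split=> [|x x_simplex]; first exact: pis_simplex.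
rewrite !cond_log_returnE ler_pM2l ?invr_gt0 //.
apply: (pointwise_argmax_of_sum_argmax (F := log_return_at E P) uE pE x_simplex pis_simplex).
by move=> g g_simplex; rewrite -!growthE //; apply: pis_max.
Qed.
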